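(* Let $S$ be a countable discrete inverse semigroup that satisfies the F\o lner condition but not the proper F\o lner condition. Then $S$ has a minimal projection.
   Context: Inverse semigroup: each $s$ has a unique $s^*$ with $ss^*s=s$, $s^*ss^*=s^*$; projections are elements of $E(S)=\{s^*s\}$, ordered by $e\le f\iff ef=e$; $e_0\in E(S)$ is minimal if $f\le e_0$ implies $f=e_0$. $S$ satisfies the F\o lner condition if for every $\varepsilon>0$ and finite $\mathcal F\subseteq S$ there is a finite non-empty $F\subseteq S$ with $|sF\cup F|\le(1+\varepsilon)|F|$ for all $s\in\mathcal F$; it satisfies the proper F\o lner condition if in addition, for any finite $A\subseteq S$, $F$ can be chosen with $A\subseteq F$. *)

From mathcomp Require Import all_boot all_order all_algebra.
Set Implicit Arguments. Unset Strict Implicit. Unset Printing Implicit Defensive.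
Import Order.TTheory GRing.Theory Num.Theory.

Section InvSemigroup.
Variables (S : countType) (mul : S -> S -> S).

Definition is_inverse (s t : S) : Prop :=
  mul (mul s t) s = s /\ mul (mul t s) t = t.

Definition inverse_semigroup : Prop :=
  (forall a b c, mul a (mul b c) = mul (mul a b) c) /\
  (forall s, exists! t, is_inverse s t).

Definition is_projection (e : S) : Prop :=
  exists s t, is_inverse s t /\ e = mul t s.

Definition proj_le (e f : S) : Prop := mul e f = e.

Definition minimal_projection (e0 : S) : Prop :=
  is_projection e0 /\ forall f, is_projection f -> proj_le f e0 -> f = e0.

(* |sF ∪ F| for a finite set F represented by a duplicate-free list *)
Definition card_sF_U_F (s : S) (F : seq S) : nat :=
  size (undup (map (mul s) F ++ F)).

Definition folner_set (eps : rat) (calF F : seq S) : Prop :=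
  uniq F /\ F <> [::] /\
  forall s, s \in calF -> ((card_sF_U_F s F)%:R <= (1 + eps) * (size F)%:R :> rat)%R.

Definition folner_condition : Prop :=
  forall (eps : rat), (0 < eps)%R -> forall calF : seq S,
    exists F : seq S, folner_set eps calF F.

Definition proper_folner_condition : Prop :=
  forall (eps : rat), (0 < eps)%R -> forall (calF A : seq S),
    exists F : seq S, folner_set eps calF F /\ {subset A <= F}.

End InvSemigroup.

(* Without a minimal projection every projection [t x] sits on top of
   arbitrarily long strictly decreasing chains of projections [g], and
   [g |-> x g] is injective on them since [t (x g) = g].  So a nonempty
   finite set [F] that is invariant under left multiplication by calF
   generates arbitrarily large invariant sets [F L].  Hence Følner sets can
   be taken arbitrarily large, because a Følner set [F] for some
   [eps < 1 / |F|] is already invariant.  Adjoining a fixed finite set [A]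
   to a large Følner set costs at most [2 |A|] elements, negligible against
   [eps |F|], which gives the proper Følner condition. *)

From mathcomp Require Import all_boot all_order all_algebra lra.
From Stdlib Require Import Classical.

Set Implicit Arguments. Unset Strict Implicit. Unset Printing Implicit Defensive.
Import Order.TTheory GRing.Theory Num.Theory.
Local Open Scope ring_scope.

Section FolnerSets.
Variables (S : countType) (mul : S -> S -> S).

Definition left_invariant (calF F : seq S) : Prop :=
  forall s y, s \in calF -> y \in F -> mul s y \in F.

Definition large_folner_condition : Prop :=
  forall eps, 0 < eps -> forall (calF : seq S) (n : nat),
    exists2 F, folner_set mul eps calF F & (n <= size F)%N.

Lemma sub_sF_U_F s F : {subset F <= undup (map (mul s) F ++ F)}.
Proof. by move=> y yF; rewrite mem_undup mem_cat yF orbT. Qed.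

Lemma card_sF_U_F_invariant s F :
  uniq F -> {in F, forall y, mul s y \in F} -> card_sF_U_F mul s F = size F.
Proof.
move=> uF sFF; apply/eqP; rewrite eqn_leq; apply/andP; split.
  apply: uniq_leq_size; first exact: undup_uniq.
  by move=> z; rewrite mem_undup mem_cat => /orP[/mapP[y yF ->]|//]; apply: sFF.
exact: uniq_leq_size uF (@sub_sF_U_F s F).
Qed.

Lemma invariant_of_card_sF_U_F_le s F :
  uniq F -> (card_sF_U_F mul s F <= size F)%N -> {in F, forall y, mul s y \in F}.
Proof.
move=> uF le_card y yF; have [_ ->] := uniq_min_size uF (@sub_sF_U_F s F) le_card.
by rewrite mem_undup mem_cat map_f.
Qed.

Lemma card_sF_U_F_undup_cat s F A :
  (card_sF_U_F mul s (undup (F ++ A)) <= card_sF_U_F mul s F + 2 * size A)%N.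
Proof.
rewrite /card_sF_U_F mul2n -addnn -{1}(size_map (mul s) A) -!size_cat.
apply: uniq_leq_size (undup_uniq _) _ => z.
rewrite !(mem_cat, mem_undup) (eq_mem_map _ (mem_undup _)) map_cat !mem_cat.
by case/orP=> /orP[] ->; rewrite ?orbT.
Qed.

Lemma folner_set_le eps1 eps2 calF F :
  eps1 <= eps2 -> folner_set mul eps1 calF F -> folner_set mul eps2 calF F.
Proof.
move=> le_eps [uF [F0 folF]]; do 2!split=> //; move=> s /folF /le_trans; apply.
by rewrite ler_wpM2r ?lerD2l.
Qed.

Lemma folner_set_invariant eps calF F :
  0 <= eps -> uniq F -> F <> [::] -> left_invariant calF F ->
  folner_set mul eps calF F.
Proof.
move=> eps_ge0 uF F0 invF; do 2!split=> //; move=> s sF.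
rewrite card_sF_U_F_invariant //; last by move=> y; apply: invF.
by rewrite mulrDl mul1r lerDl mulr_ge0.
Qed.

Lemma invariant_of_folner_set_small eps calF F :
  folner_set mul eps calF F -> eps * (size F)%:R < 1 -> left_invariant calF F.
Proof.
move=> [uF [_ folF]] small s y sF; apply: invariant_of_card_sF_U_F_le => //.
rewrite -ltnS -(ltr_nat rat) -addn1 natrD.
by apply: le_lt_trans (folF s sF) _; rewrite mulrDl mul1r ltrD2l.
Qed.

Lemma folner_set_undup_cat eps1 eps2 calF F A :
  0 <= eps1 -> 0 <= eps2 -> folner_set mul eps1 calF F ->
  (2 * size A)%:R <= eps2 * (size F)%:R ->
  folner_set mul (eps1 + eps2) calF (undup (F ++ A)).
Proof.
move=> eps1_ge0 eps2_ge0 [uF [F0 folF]] small_A; split; first exact: undup_uniq.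
have le_size : (size F <= size (undup (F ++ A)))%N.
  by apply: uniq_leq_size uF _ => z zF; rewrite mem_undup mem_cat zF.
split; first by move=> FA0; move: le_size; rewrite FA0 leqn0 size_eq0 => /eqP.
move=> s /folF card_F; move: le_size (card_sF_U_F_undup_cat s F A).
rewrite -!(ler_nat rat) natrD => le_size card_FA.
nra.
Qed.

Lemma proper_folner_of_large_folner :
  large_folner_condition -> proper_folner_condition mul.
Proof.
move=> large eps eps_gt0 calF A.
have eps_ge0 := ltW eps_gt0.
have /archi_boundP : 0 <= 4 * (size A)%:R / eps by rewrite divr_ge0 ?mulr_ge0.
set n := Num.bound _; rewrite ltr_pdivrMr // => small_A.
have [F folF le_nF] := large (eps / 2) (divr_gt0 eps_gt0 (ltr0Sn _ 1)) calF n.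
exists (undup (F ++ A)); split; last by move=> z zA; rewrite mem_undup mem_cat zA orbT.
have eps2_ge0 : 0 <= eps / 2 by rewrite divr_ge0.
rewrite [eps]splitr; apply: folner_set_undup_cat => //.
move: le_nF; rewrite -(ler_nat rat) natrM => le_nF.
nra.
Qed.

End FolnerSets.

Section InverseSemigroup.
Variables (S : countType) (mul : S -> S -> S).
Hypothesis mulA : forall a b c, mul a (mul b c) = mul (mul a b) c.
Hypothesis inverse_exists_unique : forall s, exists! t, is_inverse mul s t.

Lemma inverse_unique s t t' : is_inverse mul s t -> is_inverse mul s t' -> t = t'.
Proof.
move=> inv_t inv_t'; have [u [_ u_uniq]] := inverse_exists_unique s.
by rewrite -(u_uniq _ inv_t) -(u_uniq _ inv_t').
Qed.

Lemma mul_idem_absorb e x : mul e e = e -> mul e (mul e x) = mul e x.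
Proof. by move=> ee; rewrite mulA ee. Qed.

(* The inverse [b] of [e f] is also inverted by [f b e], so [b = f b e] is
   idempotent, hence its own inverse, and [e f = b]. *)
Lemma idempotent_mul e f :
  mul e e = e -> mul f f = f -> mul (mul e f) (mul e f) = mul e f.
Proof.
move=> ee ff; have [b [[efb bef] _]] := inverse_exists_unique (mul e f).
have inv_fbe : is_inverse mul (mul e f) (mul f (mul b e)).
  split.
    transitivity (mul (mul (mul e f) b) (mul e f)); last by [].
    by rewrite -!mulA mul_idem_absorb // mul_idem_absorb.
  transitivity (mul f (mul (mul (mul b (mul e f)) b) e)); last by rewrite bef.
  by rewrite -!mulA mul_idem_absorb // mul_idem_absorb.
have b_fbe := inverse_unique inv_fbe (conj efb bef).
have bb : mul b b = b.
  rewrite -{1 2 3}b_fbe.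
  transitivity (mul f (mul (mul (mul b (mul e f)) b) e)); last by rewrite bef.
  by rewrite -!mulA.
suff -> : mul e f = b by rewrite bb.
by apply: (inverse_unique (s := b)); split; rewrite ?bb.
Qed.

Lemma idempotent_mulC e f : mul e e = e -> mul f f = f -> mul e f = mul f e.
Proof.
move=> ee ff; have efef := idempotent_mul ee ff; have fefe := idempotent_mul ff ee.
apply: (inverse_unique (s := mul e f)); first by split; rewrite efef.
split.
  transitivity (mul (mul e f) (mul e f)); last by [].
  by rewrite -!mulA mul_idem_absorb // mul_idem_absorb.
transitivity (mul (mul f e) (mul f e)); last by [].
by rewrite -!mulA mul_idem_absorb // mul_idem_absorb.
Qed.

Lemma projection_idempotent e : is_projection mul e -> mul e e = e.
Proof. by move=> [s [t [[_ tst] ->]]]; rewrite mulA tst. Qed.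

Lemma projection_mulC e f :
  is_projection mul e -> is_projection mul f -> mul e f = mul f e.
Proof.
by move=> /projection_idempotent ee /projection_idempotent ff; apply: idempotent_mulC.
Qed.

Lemma proj_le_trans e f g : proj_le mul e f -> proj_le mul f g -> proj_le mul e g.
Proof. by rewrite /proj_le => ef fg; rewrite -ef -mulA fg. Qed.

Lemma mul_inverseK_proj_le x t g :
  is_inverse mul x t -> is_projection mul g -> proj_le mul g (mul t x) ->
  mul t (mul x g) = g.
Proof.
move=> inv_xt Pg g_le; have Ptx : is_projection mul (mul t x) by exists x, t.
by rewrite mulA (projection_mulC Ptx Pg).
Qed.

Hypothesis no_minimal_projection : forall e, ~ minimal_projection mul e.

Lemma exists_proj_lt e : is_projection mul e ->
  exists g, [/\ is_projection mul g, proj_le mul g e & g != e].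
Proof.
move=> Pe; apply: NNPP => no_lt; apply: (@no_minimal_projection e); split=> // f Pf f_le.
by apply: NNPP => f_ne; apply: no_lt; exists f; split=> //; apply/eqP.
Qed.

Lemma projection_chain f n : is_projection mul f ->
  exists2 L, size L = n /\ uniq L &
    forall g, g \in L -> is_projection mul g /\ proj_le mul g f.
Proof.
move=> Pf; suff [L [b [_ _ [sizeL uL _] HL]]] : exists L b,
    [/\ is_projection mul b, proj_le mul b f, [/\ size L = n, uniq L & b \notin L] &
    forall g, g \in L -> [/\ is_projection mul g, proj_le mul g f & proj_le mul b g]].
  by exists L => // g /HL[].
elim: n => [|n [L [b [Pb b_le_f [sizeL uL bL] HL]]]].
  by exists [::], f; split; rewrite /proj_le ?projection_idempotent.
have [c [Pc c_le_b c_neq_b]] := exists_proj_lt Pb.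
exists (b :: L), c; split=> //; first exact: proj_le_trans c_le_b b_le_f.
  split=> /=; [by rewrite sizeL | by rewrite bL uL |].
  rewrite in_cons negb_or c_neq_b /=; apply/negP=> /HL[_ _ b_le_c].
  by move: c_neq_b; rewrite -c_le_b projection_mulC // b_le_c eqxx.
move=> g; rewrite in_cons => /predU1P[->|/HL[Pg g_le_f b_le_g]]; first by [].
by split=> //; apply: proj_le_trans c_le_b b_le_g.
Qed.

Lemma large_left_invariant calF F n : F <> [::] -> left_invariant mul calF F ->
  exists G, [/\ uniq G, (n <= size G)%N & left_invariant mul calF G].
Proof.
case: F => [//|x F] _ invF; have [t [inv_xt _]] := inverse_exists_unique x.
have Ptx : is_projection mul (mul t x) by exists x, t.
have [L [sizeL uL] HL] := projection_chain n Ptx.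
exists (undup [seq mul y g | y <- x :: F, g <- L]); split.
- exact: undup_uniq.
- rewrite -sizeL -(size_map (mul x)); apply: uniq_leq_size.
    rewrite map_inj_in_uniq // => g1 g2 /HL[P1 le1] /HL[P2 le2] xg12.
    by rewrite -(mul_inverseK_proj_le inv_xt P1 le1) xg12 mul_inverseK_proj_le.
  by move=> z /mapP[g gL ->]; rewrite mem_undup; apply: allpairs_f (mem_head _ _) gL.
- move=> s z sF; rewrite !mem_undup => /allpairsP[[y g] /= [yF gL ->]].
  by rewrite mulA; apply: allpairs_f (invF _ _ sF yF) gL.
Qed.

Lemma large_folner_of_folner : folner_condition mul -> large_folner_condition mul.
Proof.
move=> folner eps eps_gt0 calF n.
pose eps' := Num.min eps n.+1%:R^-1.
have eps'_gt0 : 0 < eps' by rewrite lt_min eps_gt0 invr_gt0 ltr0Sn.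
have [F folF] := folner eps' eps'_gt0 calF.
have [le_nF|lt_Fn] := leqP n (size F).
  by exists F => //; apply: folner_set_le folF; rewrite ge_min lexx.
have invF : left_invariant mul calF F.
  apply: invariant_of_folner_set_small folF _.
  apply: le_lt_trans (_ : _ <= n.+1%:R^-1 * (size F)%:R) _.
    by rewrite ler_wpM2r // ge_min lexx orbT.
  by rewrite mulrC ltr_pdivrMr ?ltr0Sn // mul1r ltr_nat ltnS ltnW.
have [|G [uG le_nG invG]] := large_left_invariant n _ invF.
  by case: folF => _ [].
exists G => //; apply: folner_set_invariant => //; first exact: ltW.
by move=> G0; move: le_nG lt_Fn; rewrite G0 leqn0 => /eqP->.
Qed.

End InverseSemigroup.

Theorem mainTheorem12 (S : countType) (mul : S -> S -> S) :
  inverse_semigroup mul ->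
  folner_condition mul ->
  ~ proper_folner_condition mul ->
  exists e0 : S, minimal_projection mul e0.
Proof.
move=> [mulA inverse_exists_unique] folner not_proper; apply: NNPP => no_minimal.
apply/not_proper/proper_folner_of_large_folner.
apply: large_folner_of_folner folner => // e min_e.
by apply: no_minimal; exists e.
Qed.
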